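(* Let $(A,B,s,t,\Delta)$ be a left multiplier bialgebroid with a left counit $\varepsilon$. Then the image $B_0:=\varepsilon(A)$ is an idempotent, essential two-sided ideal in $B$, and $s(B_0)A=A=t(B_0)A$.
   Context: All algebras are associative complex algebras, not necessarily unital. For an algebra $A$ with $A_A$ non-degenerate, $L(A)$ denotes right $A$-module endomorphisms of $A$ (containing $A$ via left multiplication) and $M(A)=\{T\in L(A):aT\in A\ \forall a\}$. A left multiplier bialgebroid is a tuple $(A,B,s,t,\Delta)$: (i) $A,B$ algebras, $A_A$ non-degenerate and idempotent ($AA=A$); (ii) $s\colon B\to M(A)$ homomorphism, $t\colon B\to M(A)$ anti-homomorphism with commuting images, $s,t$ injective, $s(B)A=A=t(B)A$; ${}_BA\otimes A^B$, the quotient of $A\otimes A$ by the span of $s(x)a\otimes b-a\otimes t(x)b$, is non-degenerate as a right module over $A\otimes1$ and $1\otimes A$; (iii) $\Delta$ is an algebra homomorphism into the algebra of endomorphisms $T$ of ${}_BA\otimes A^B$ for which $T(a\otimes1),T(1\otimes b)\in{}_BA\otimes A^B$ exist with $T(a\otimes b)=T(a\otimes1)(1\otimes b)=T(1\otimes b)(a\otimes1)$; (iv) $\Delta(s(x)t(y)as(x')t(y'))=(t(y)\otimes s(x))\Delta(a)(t(y')\otimes s(x'))$; (v) if $\Delta(b)(1\otimes c)=\sum p_i\otimes q_i$ and $\Delta(b)(a\otimes1)=\sum u_j\otimes v_j$ then $\sum\Delta(p_i)(a\otimes1)\otimes q_i=\sum u_j\otimes\Delta(v_j)(1\otimes c)$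 in $A^{\otimes3}$ modulo the span of $s(x)a\otimes b\otimes c-a\otimes t(x)b\otimes c$ and $a\otimes s(x)b\otimes c-a\otimes b\otimes t(x)c$. Canonical maps $T_\lambda(a\otimes b)=\Delta(b)(a\otimes 1)$, $T_\rho(a\otimes b)=\Delta(a)(1\otimes b)$. A left counit is a linear $\varepsilon\colon A\to B$ with $\varepsilon(s(x)a)=x\varepsilon(a)$, $\varepsilon(t(y)a)=\varepsilon(a)y$, $\sum t(\varepsilon(c_i))d_i=ab$ whenever $T_\rho(a\otimes b)=\sum c_i\otimes d_i$, and $\sum s(\varepsilon(d_i))c_i=ba$ whenever $T_\lambda(a\otimes b)=\sum c_i\otimes d_i$. A two-sided ideal $I$ of $B$ is essential if $xI=0$ or $Ix=0$ implies $x=0$; idempotent means $II=I$. *)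

From Stdlib Require Import ClassicalEpsilon List.
From mathcomp Require Import all_boot all_algebra.
From mathcomp Require Import reals.
From mathcomp.real_closed Require Export complex.
Import GRing.Theory.
Set Implicit Arguments. Unset Strict Implicit. Unset Printing Implicit Defensive.
Local Open Scope ring_scope.

Section Defs.
Variable K : fieldType.

Definition linear_map (V W : lmodType K) (f : V -> W) : Prop :=
  forall (k : K) (u v : V), f (k *: u + v) = k *: f u + f v.

Definition in_span (V : lmodType K) (P : V -> Prop) (v : V) : Prop :=
  exists l : seq (K * V), (forall p, List.In p l -> P p.2) /\
    v = \sum_(p <- l) p.1 *: p.2.

Definition bilinear_map (U V W : lmodType K) (f : U -> V -> W) : Prop :=
  (forall v, linear_map (fun u => f u v)) /\ (forall u, linear_map (f u)).

Definition trilinear_map (U V X W : lmodType K) (f : U -> V -> X -> W) : Prop :=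
  (forall v x, linear_map (fun u => f u v x)) /\
  (forall u x, linear_map (fun v => f u v x)) /\
  (forall u v, linear_map (f u v)).

Definition is_algebra (A : lmodType K) (m : A -> A -> A) : Prop :=
  bilinear_map m /\ forall a b c, m a (m b c) = m (m a b) c.

Definition right_nondegenerate (A : lmodType K) (m : A -> A -> A) : Prop :=
  forall a, (forall b, m a b = 0) -> a = 0.

Definition idempotent_algebra (A : lmodType K) (m : A -> A -> A) : Prop :=
  forall a, in_span (fun w => exists x y, w = m x y) a.

Definition in_LA (A : lmodType K) (m : A -> A -> A) (T : A -> A) : Prop :=
  linear_map T /\ forall a b, T (m a b) = m (T a) b.

(* T in M(A): T in L(A) and aT in A for all a, i.e. b |-> a T(b) is left
   multiplication by some element of A *)
Definition in_MA (A : lmodType K) (m : A -> A -> A) (T : A -> A) : Prop :=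
  in_LA m T /\ forall a, exists c, forall b, m a (T b) = m c b.

Section Tensor.
Variables (A B : lmodType K) (s t : B -> A -> A).

(* (Q, i) is  _B A (x) A^B : the quotient of A (x) A by the span of
   s(x)a (x) b - a (x) t(x)b, i.e. the universal bilinear map that is
   balanced w.r.t. these relations. *)
Definition balanced2 (W : lmodType K) (f : A -> A -> W) : Prop :=
  forall x a b, f (s x a) b = f a (t x b).

Definition is_balanced_tensor2 (Q : lmodType K) (i : A -> A -> Q) : Prop :=
  bilinear_map i /\ balanced2 i /\
  forall (W : lmodType K) (f : A -> A -> W), bilinear_map f -> balanced2 f ->
    exists! g : Q -> W, linear_map g /\ forall a b, g (i a b) = f a b.

Definition balanced3 (W : lmodType K) (f : A -> A -> A -> W) : Prop :=
  (forall x a b c, f (s x a) b c = f a (t x b) c) /\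
  (forall x a b c, f a (s x b) c = f a b (t x c)).

Definition is_balanced_tensor3 (Q3 : lmodType K) (i3 : A -> A -> A -> Q3) : Prop :=
  trilinear_map i3 /\ balanced3 i3 /\
  forall (W : lmodType K) (f : A -> A -> A -> W), trilinear_map f -> balanced3 f ->
    exists! g : Q3 -> W, linear_map g /\ forall a b c, g (i3 a b c) = f a b c.

End Tensor.

(* the linear map Q -> W induced by f (meaningful when f is bilinear and
   balanced and (Q,i) is the balanced tensor product) *)
Definition tlift (A Q W : lmodType K) (i : A -> A -> Q) (f : A -> A -> W) : Q -> W :=
  epsilon (inhabits (fun _ => 0))
    (fun g : Q -> W => linear_map g /\ forall a b, g (i a b) = f a b).

Section Bialgebroid.
Variables (A B : lmodType K) (mA : A -> A -> A) (mB : B -> B -> B)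
  (s t : B -> A -> A) (Q : lmodType K) (i : A -> A -> Q)
  (Q3 : lmodType K) (i3 : A -> A -> A -> Q3).

(* right module structure of  _B A (x) A^B  over A (x) 1 and 1 (x) A *)
Definition ract1 (w : Q) (a : A) : Q := tlift i (fun u v => i (mA u a) v) w.
Definition ract2 (w : Q) (b : A) : Q := tlift i (fun u v => i u (mA v b)) w.

Definition lmult (m n : A -> A) (w : Q) : Q := tlift i (fun u v => i (m u) (n v)) w.

Definition j12 (w : Q) (c : A) : Q3 := tlift i (fun u v => i3 u v c) w.
Definition j23 (a : A) (w : Q) : Q3 := tlift i (fun u v => i3 a u v) w.

(* for T in the endomorphism algebra: T(a (x) 1) and T(1 (x) b) *)
Definition Tat_left (T : Q -> Q) (a : A) : Q :=
  epsilon (inhabits 0) (fun w => forall b, T (i a b) = ract2 w b).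
Definition Tat_right (T : Q -> Q) (b : A) : Q :=
  epsilon (inhabits 0) (fun w => forall a, T (i a b) = ract1 w a).

Definition in_End (T : Q -> Q) : Prop :=
  linear_map T /\
  (forall a, exists w, forall b, T (i a b) = ract2 w b) /\
  (forall b, exists w, forall a, T (i a b) = ract1 w a).

Definition left_multiplier_bialgebroid (Delta : A -> Q -> Q) : Prop :=
  is_algebra mA /\ is_algebra mB /\ right_nondegenerate mA /\ idempotent_algebra mA /\
  (forall x, in_MA mA (s x)) /\ (forall x, in_MA mA (t x)) /\
  (forall k x y a, s (k *: x + y) a = k *: s x a + s y a) /\
  (forall k x y a, t (k *: x + y) a = k *: t x a + t y a) /\
  (forall x y a, s (mB x y) a = s x (s y a)) /\
  (forall x y a, t (mB x y) a = t y (t x a)) /\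
  (forall x y a, s x (t y a) = t y (s x a)) /\
  (forall x y, s x = s y -> x = y) /\ (forall x y, t x = t y -> x = y) /\
  (forall a, in_span (fun w => exists x b, w = s x b) a) /\
  (forall a, in_span (fun w => exists x b, w = t x b) a) /\
  is_balanced_tensor2 s t i /\
  (forall w, (forall a, ract1 w a = 0) -> w = 0) /\
  (forall w, (forall a, ract2 w a = 0) -> w = 0) /\
  (forall a, in_End (Delta a)) /\
  (forall k a b w, Delta (k *: a + b) w = k *: Delta a w + Delta b w) /\
  (forall a b w, Delta (mA a b) w = Delta a (Delta b w)) /\
  (* (iv): c = a s(x') t(y') *)
  (forall x y x' y' a c, (forall b, mA c b = mA a (s x' (t y' b))) ->
     forall w, Delta (s x (t y c)) w =
       lmult (t y) (s x) (Delta a (lmult (t y') (s x') w))) /\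
  is_balanced_tensor3 s t i3 /\
  (forall (a b c : A) (pq uv : seq (A * A)),
     Tat_right (Delta b) c = \sum_(p <- pq) i p.1 p.2 ->
     Tat_left (Delta b) a = \sum_(p <- uv) i p.1 p.2 ->
     \sum_(p <- pq) j12 (Tat_left (Delta p.1) a) p.2 =
     \sum_(p <- uv) j23 p.1 (Tat_right (Delta p.2) c)).

Definition T_lambda (Delta : A -> Q -> Q) (a b : A) : Q := Tat_left (Delta b) a.
Definition T_rho (Delta : A -> Q -> Q) (a b : A) : Q := Tat_right (Delta a) b.

Definition left_counit (Delta : A -> Q -> Q) (eps : A -> B) : Prop :=
  linear_map eps /\
  (forall x a, eps (s x a) = mB x (eps a)) /\
  (forall y a, eps (t y a) = mB (eps a) y) /\
  (forall a b (cd : seq (A * A)), T_rho Delta a b = \sum_(p <- cd) i p.1 p.2 ->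
     \sum_(p <- cd) t (eps p.1) p.2 = mA a b) /\
  (forall a b (cd : seq (A * A)), T_lambda Delta a b = \sum_(p <- cd) i p.1 p.2 ->
     \sum_(p <- cd) s (eps p.2) p.1 = mA b a).
End Bialgebroid.

Section Ideals.
Variables (B : lmodType K) (mB : B -> B -> B).

Definition two_sided_ideal (I : B -> Prop) : Prop :=
  I 0 /\ (forall k x y, I x -> I y -> I (k *: x + y)) /\
  (forall x y, I y -> I (mB x y) /\ I (mB y x)).

Definition idempotent_ideal (I : B -> Prop) : Prop :=
  forall z, I z <-> in_span (fun w => exists x y, I x /\ I y /\ w = mB x y) z.

Definition essential_ideal (I : B -> Prop) : Prop :=
  forall x, ((forall y, I y -> mB x y = 0) \/ (forall y, I y -> mB y x = 0)) -> x = 0.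
End Ideals.

End Defs.

(* A left counit lets one expand every product ab both as a sum of terms
   t(eps c) d (read off T_rho(a (x) b)) and as a sum of terms s(eps d) c (read off
   T_lambda(b (x) a)), since every element of the balanced tensor product is a
   finite sum of simple tensors.  As A = AA this gives s(B0)A = A = t(B0)A.
   Applying eps, which is B-bilinear, gives eps(ab) as a sum of products
   eps(d) eps(c), so B0 = B0 B0.  If x B0 = 0, then s(x) kills every product,
   hence all of A, and x = 0 by injectivity of s; symmetrically with t when
   B0 x = 0. *)

From HB Require Import structures.
From Stdlib Require Import List.
From mathcomp Require Import all_boot all_algebra boolp generic_quotient.
From mathcomp Require Import reals.
From mathcomp.real_closed Require Import complex.
Import GRing.Theory.
Set Implicit Arguments. Unset Strict Implicit. Unset Printing Implicit Defensive.
Local Open Scope ring_scope.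
Local Open Scope quotient_scope.

Section Span.
Variables (K : fieldType) (V : lmodType K) (P : V -> Prop).

Lemma span0 : in_span P 0.
Proof. by exists nil; split=> //; rewrite big_nil. Qed.

Lemma span1 v : P v -> in_span P v.
Proof.
by move=> Pv; exists [:: (1, v)]; split; [move=> p [<-|[]] | rewrite big_seq1 scale1r].
Qed.

Lemma spanD u v : in_span P u -> in_span P v -> in_span P (u + v).
Proof.
move=> [l1 [P1 ->]] [l2 [P2 ->]]; exists (l1 ++ l2); split; last by rewrite big_cat.
by move=> p /(in_app_or _ _ _) [/P1|/P2].
Qed.

Lemma spanZ k v : in_span P v -> in_span P (k *: v).
Proof.
move=> [l [Pl ->]]; exists [seq (k * p.1, p.2) | p <- l]; split.
  by move=> p /in_map_iff [q [<- /Pl]].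
by rewrite big_map scaler_sumr; apply: eq_bigr => p _; rewrite scalerA.
Qed.

Lemma spanN v : in_span P v -> in_span P (- v).
Proof. by rewrite -scaleN1r; apply: spanZ. Qed.

Lemma span_ind (I : V -> Prop) :
  I 0 -> (forall k u v, I u -> I v -> I (k *: u + v)) -> (forall v, P v -> I v) ->
  forall v, in_span P v -> I v.
Proof.
move=> I0 Ilin IP _ [l [Pl ->]]; elim: l Pl => [|p l IHl] Pl; first by rewrite big_nil.
rewrite big_cons; apply: Ilin; first by apply/IP/Pl; left.
by apply: IHl => q lq; apply: Pl; right.
Qed.

Lemma span_sum (I : Type) (l : seq I) (F : I -> V) :
  (forall p, List.In p l -> in_span P (F p)) -> in_span P (\sum_(p <- l) F p).
Proof.
elim: l => [|p l IHl] Pl; first by rewrite big_nil; apply: span0.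
rewrite big_cons; apply: spanD; first by apply: Pl; left.
by apply: IHl => q lq; apply: Pl; right.
Qed.
End Span.

Lemma span_trans (K : fieldType) (V : lmodType K) (P P' : V -> Prop) v :
  (forall w, P w -> in_span P' w) -> in_span P v -> in_span P' v.
Proof.
move=> PP'; apply: span_ind => // [|k u w Pu Pw]; first exact: span0.
exact/spanD/Pw/spanZ.
Qed.

Section SpanQuotient.
Variables (K : fieldType) (V : lmodType K) (P : V -> Prop).

Definition eq_mod_span (u v : V) : bool := `[< in_span P (u - v) >].

Lemma eq_mod_span_equiv : equiv_class_of eq_mod_span.
Proof.
split=> [u|u v|v u w]; rewrite /eq_mod_span.
- by apply/asboolP; rewrite subrr; apply: span0.
- by apply/asboolP/asboolP => /spanN; rewrite opprB.
- move=> /asboolP Hvu /asboolP Huw; apply/asboolP.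
  by have := spanD Hvu Huw; rewrite addrA subrK.
Qed.

Canonical eq_mod_span_rel := EquivRelPack eq_mod_span_equiv.

Local Notation quot_span := {eq_quot eq_mod_span_rel}.

Lemma quot_span_eq u v : in_span P (u - v) -> u = v %[mod quot_span].
Proof. by move=> Puv; apply/eqquotP/asboolP. Qed.

Lemma repr_quot_span u : in_span P (u - repr (\pi_quot_span u)).
Proof. by apply/asboolP/(@eqquotP _ _ quot_span); rewrite reprK. Qed.

Lemma quot_spanW (Pr : quot_span -> Prop) :
  (forall v, Pr (\pi_quot_span v)) -> forall x, Pr x.
Proof. exact: quotW. Qed.

Definition quot_add (x y : quot_span) : quot_span :=
  \pi_quot_span (repr x + repr y).
Definition quot_opp (x : quot_span) : quot_span := \pi_quot_span (- repr x).
Definition quot_scale (k : K) (x : quot_span) : quot_span :=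
  \pi_quot_span (k *: repr x).

Lemma pi_quot_add : {morph \pi_quot_span : u v / u + v >-> quot_add u v}.
Proof.
move=> u v; apply: quot_span_eq; rewrite opprD addrACA.
by apply: spanD; apply: repr_quot_span.
Qed.

Lemma pi_quot_opp : {morph \pi_quot_span : u / - u >-> quot_opp u}.
Proof.
by move=> u; apply: quot_span_eq; rewrite -opprD; apply/spanN/repr_quot_span.
Qed.

Lemma pi_quot_scale k : {morph \pi_quot_span : u / k *: u >-> quot_scale k u}.
Proof.
by move=> u; apply: quot_span_eq; rewrite -scalerBr; apply/spanZ/repr_quot_span.
Qed.

Lemma quot_addA : associative quot_add.
Proof.
move=> x y z; elim/quot_spanW: x => a; elim/quot_spanW: y => b.
by elim/quot_spanW: z => c; rewrite -!pi_quot_add addrA.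
Qed.

Lemma quot_addC : commutative quot_add.
Proof.
move=> x y; elim/quot_spanW: x => a; elim/quot_spanW: y => b.
by rewrite -!pi_quot_add addrC.
Qed.

Lemma quot_add0 : left_id (\pi_quot_span 0) quot_add.
Proof. by move=> x; elim/quot_spanW: x => a; rewrite -pi_quot_add add0r. Qed.

Lemma quot_addN : left_inverse (\pi_quot_span 0) quot_opp quot_add.
Proof. by move=> x; elim/quot_spanW: x => a; rewrite -pi_quot_opp -pi_quot_add addNr. Qed.

HB.instance Definition _ :=
  GRing.isZmodule.Build quot_span quot_addA quot_addC quot_add0 quot_addN.

Lemma pi_quot_spanD (u v : V) :
  \pi_quot_span (u + v) = \pi_quot_span u + \pi_quot_span v :> quot_span.
Proof. exact: pi_quot_add. Qed.

Lemma quot_scaleA a b (x : quot_span) :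
  quot_scale a (quot_scale b x) = quot_scale (a * b) x.
Proof. by elim/quot_spanW: x => ?; rewrite -!pi_quot_scale scalerA. Qed.

Lemma quot_scale1 : left_id 1 quot_scale.
Proof. by move=> x; elim/quot_spanW: x => a; rewrite -pi_quot_scale scale1r. Qed.

Lemma quot_scaleDr : right_distributive quot_scale +%R.
Proof.
move=> k x y; elim/quot_spanW: x => a; elim/quot_spanW: y => b.
by rewrite -pi_quot_spanD -!pi_quot_scale -pi_quot_spanD scalerDr.
Qed.

Lemma quot_scaleDl (x : quot_span) : {morph quot_scale^~ x : a b / a + b}.
Proof.
by move=> a b; elim/quot_spanW: x => ?; rewrite -!pi_quot_scale -pi_quot_spanD scalerDl.
Qed.

HB.instance Definition _ := GRing.Zmodule_isLmodule.Build K quot_span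
  quot_scaleA quot_scale1 quot_scaleDr quot_scaleDl.

Lemma pi_quot_span_linear : linear_map (\pi_quot_span : V -> quot_span).
Proof. by move=> k u v; rewrite pi_quot_spanD pi_quot_scale. Qed.

Lemma pi_quot_span_eq0 v : \pi_quot_span v = \pi_quot_span 0 -> in_span P v.
Proof. by move=> /eqquotP /asboolP; rewrite subr0. Qed.
End SpanQuotient.

Section LinearMaps.
Variables (K : fieldType) (V W : lmodType K).

Lemma linear_map0 (f : V -> W) : linear_map f -> f 0 = 0.
Proof.
move=> f_lin; apply: (addrI (f 0)).
by rewrite addr0 -{1}[f 0]scale1r -f_lin scale1r addr0.
Qed.

Lemma linear_mapD (f : V -> W) u v : linear_map f -> f (u + v) = f u + f v.
Proof. by move=> f_lin; rewrite -{1}[u]scale1r f_lin scale1r. Qed.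

Lemma linear_mapZ (f : V -> W) k v : linear_map f -> f (k *: v) = k *: f v.
Proof. by move=> f_lin; rewrite -[k *: v]addr0 f_lin linear_map0 // addr0. Qed.

Lemma linear_map_sum (f : V -> W) (I : Type) (l : seq I) (F : I -> V) :
  linear_map f -> f (\sum_(p <- l) F p) = \sum_(p <- l) f (F p).
Proof.
move=> f_lin; elim: l => [|p l IHl]; first by rewrite !big_nil linear_map0.
by rewrite !big_cons linear_mapD // IHl.
Qed.

Lemma span_linear_image (f : V -> W) (P : V -> Prop) (P' : W -> Prop) v :
  linear_map f -> (forall w, P w -> in_span P' (f w)) -> in_span P v -> in_span P' (f v).
Proof.
move=> f_lin fP; apply: span_ind (fun v => in_span P' (f v)) _ _ fP _.
- by rewrite linear_map0 //; apply: span0.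
- by move=> k u w Pu Pw; rewrite f_lin; apply/spanD/Pw/spanZ.
Qed.
End LinearMaps.

Section BalancedTensor.
Variables (K : fieldType) (A B Q : lmodType K) (s t : B -> A -> A) (i : A -> A -> Q).
Hypothesis tensorQ : is_balanced_tensor2 s t i.

(* Both the zero map and the projection onto the quotient by the span of simple
   tensors extend the zero map on simple tensors, so uniqueness identifies them. *)
Lemma balanced_tensor_span q : in_span (fun w => exists a b, w = i a b) q.
Proof.
set P := fun w => exists a b, w = i a b.
have [|//|g [_ g_uniq]] := tensorQ.2.2 {eq_quot (eq_mod_span_rel P)} (fun _ _ => 0).
  by split=> [v|u] k x y; rewrite scaler0 addr0.
have g_pi : g = \pi_{eq_quot (eq_mod_span_rel P)}.
  apply: g_uniq; split; first exact: pi_quot_span_linear.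
  by move=> a b; apply: quot_span_eq; rewrite subr0; apply: span1; exists a, b.
have g0 : g = fun _ => 0.
  by apply: g_uniq; split=> // k x y; rewrite scaler0 addr0.
by apply: pi_quot_span_eq0; rewrite -g_pi g0.
Qed.

Lemma balanced_tensor_sum q : exists cd : seq (A * A), q = \sum_(p <- cd) i p.1 p.2.
Proof.
have [[i_lin _] _] := tensorQ.
pose I q := exists cd : seq (A * A), q = \sum_(p <- cd) i p.1 p.2.
apply: (span_ind (I := I)) (balanced_tensor_span q).
- by exists [::]; rewrite big_nil.
- move=> k u v [cd1 ->] [cd2 ->].
  exists ([seq (k *: p.1, p.2) | p <- cd1] ++ cd2).
  rewrite big_cat big_map scaler_sumr; congr (_ + _); apply: eq_bigr => p _.
  exact: esym (linear_mapZ k p.1 (i_lin p.2)).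
- by move=> _ [a [b ->]]; exists [:: (a, b)]; rewrite big_seq1.
Qed.
End BalancedTensor.

Definition range_of (T U : Type) (f : T -> U) (y : U) : Prop := exists x, y = f x.

Section LeftCounit.
Variables (K : fieldType) (A B Q : lmodType K) (mA : A -> A -> A) (mB : B -> B -> B).
Variables (s t : B -> A -> A) (i : A -> A -> Q) (Delta : A -> Q -> Q) (eps : A -> B).
Hypothesis tensorQ : is_balanced_tensor2 s t i.
Hypothesis counit : left_counit mA mB s t i Delta eps.
Hypothesis idemA : idempotent_algebra mA.

Lemma mul_eq_sum_t_counit u v :
  exists cd : seq (A * A), mA u v = \sum_(p <- cd) t (eps p.1) p.2.
Proof.
have [cd cdE] := balanced_tensor_sum tensorQ (T_rho mA i Delta u v).
by exists cd; rewrite (counit.2.2.2.1 _ _ _ cdE).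
Qed.

Lemma mul_eq_sum_s_counit u v :
  exists cd : seq (A * A), mA u v = \sum_(p <- cd) s (eps p.2) p.1.
Proof.
have [cd cdE] := balanced_tensor_sum tensorQ (T_lambda mA i Delta v u).
by exists cd; rewrite (counit.2.2.2.2 _ _ _ cdE).
Qed.

Lemma counit_range_ideal : two_sided_ideal mB (range_of eps).
Proof.
have [eps_lin [eps_s [eps_t _]]] := counit.
split; first by exists 0; rewrite linear_map0.
split; first by move=> k _ _ [a ->] [b ->]; exists (k *: a + b); rewrite eps_lin.
by move=> x _ [a ->]; split; [exists (s x a) | exists (t x a)].
Qed.

Lemma counit_range_idempotent : idempotent_ideal mB (range_of eps).
Proof.
have [eps_lin [_ [eps_t _]]] := counit.
have [I0 [Ilin Imul]] := counit_range_ideal.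
move=> z; split.
- move=> [c ->]; apply: (span_linear_image eps_lin _ (idemA c)) => _ [u [v ->]].
  have [cd ->] := mul_eq_sum_t_counit u v; rewrite linear_map_sum //.
  apply: span_sum => p _; rewrite eps_t; apply: span1.
  by exists (eps p.2), (eps p.1); split; [exists p.2 | split; [exists p.1 |]].
- apply: (span_ind (I := range_of eps)) => // _ [x [y [_ [Ry ->]]]].
  exact: (Imul x y Ry).1.
Qed.

Lemma s_counit_range_span a :
  in_span (fun w => exists x b, range_of eps x /\ w = s x b) a.
Proof.
apply: span_trans (idemA a) => _ [u [v ->]].
have [cd ->] := mul_eq_sum_s_counit u v; apply: span_sum => p _; apply: span1.
by exists (eps p.2), p.1; split => //; exists p.2.
Qed.

Lemma t_counit_range_span a :
  in_span (fun w => exists x b, range_of eps x /\ w = t x b) a.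
Proof.
apply: span_trans (idemA a) => _ [u [v ->]].
have [cd ->] := mul_eq_sum_t_counit u v; apply: span_sum => p _; apply: span1.
by exists (eps p.1), p.2; split => //; exists p.1.
Qed.

Lemma vanish_on_products (f : A -> A) :
  linear_map f -> (forall u v, f (mA u v) = 0) -> forall a, f a = 0.
Proof.
move=> f_lin f_mul a; apply: (span_ind (I := fun a => f a = 0)) (idemA a).
- exact: linear_map0.
- by move=> k u v fu fv; rewrite f_lin fu fv scaler0 addr0.
- by move=> _ [u [v ->]].
Qed.

Hypotheses (s_lin : forall x, linear_map (s x)) (t_lin : forall x, linear_map (t x)).
Hypothesis s_linl : forall k x y a, s (k *: x + y) a = k *: s x a + s y a.
Hypothesis t_linl : forall k x y a, t (k *: x + y) a = k *: t x a + t y a.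
Hypothesis s_mul : forall x y a, s (mB x y) a = s x (s y a).
Hypothesis t_mul : forall x y a, t (mB x y) a = t y (t x a).
Hypotheses (s_inj : injective s) (t_inj : injective t).

Lemma counit_range_essential : essential_ideal mB (range_of eps).
Proof.
have s0 a : s 0 a = 0 by apply: (linear_map0 (f := s^~ a)) => k x y; apply: s_linl.
have t0 a : t 0 a = 0 by apply: (linear_map0 (f := t^~ a)) => k x y; apply: t_linl.
move=> x [xR0|R0x].
- apply: s_inj; apply: funext => a; rewrite s0.
  apply: (vanish_on_products (s_lin x)) => u v.
  have [cd ->] := mul_eq_sum_s_counit u v; rewrite linear_map_sum //.
  by apply: big1_seq => p _; rewrite -s_mul xR0 ?s0 //; exists p.2.
- apply: t_inj; apply: funext => a; rewrite t0.
  apply: (vanish_on_products (t_lin x)) => u v.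
  have [cd ->] := mul_eq_sum_t_counit u v; rewrite linear_map_sum //.
  by apply: big1_seq => p _; rewrite -t_mul R0x ?t0 //; exists p.1.
Qed.
End LeftCounit.

Theorem lemma3p6 (R : realType) (A B : lmodType R[i])
  (mA : A -> A -> A) (mB : B -> B -> B) (s t : B -> A -> A)
  (Q : lmodType R[i]) (i2 : A -> A -> Q)
  (Q3 : lmodType R[i]) (i3 : A -> A -> A -> Q3)
  (Delta : A -> Q -> Q) (eps : A -> B) :
  left_multiplier_bialgebroid mA mB s t i2 i3 Delta ->
  left_counit mA mB s t i2 Delta eps ->
  let B0 := fun x : B => exists a : A, x = eps a in
  two_sided_ideal mB B0 /\ idempotent_ideal mB B0 /\ essential_ideal mB B0 /\
  (forall a : A, in_span (fun w => exists x b, B0 x /\ w = s x b) a) /\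
  (forall a : A, in_span (fun w => exists x b, B0 x /\ w = t x b) a).
Proof.
move=> [_ [_ [_ [idemA [sM [tM [s_linl [t_linl [s_mul [t_mul [_ [s_inj [t_inj
  [_ [_ [tensorQ _]]]]]]]]]]]]]]]] counit /=.
have s_lin x : linear_map (s x) by case: (sM x) => [[]].
have t_lin x : linear_map (t x) by case: (tM x) => [[]].
split; first exact: counit_range_ideal counit.
split; first exact: counit_range_idempotent tensorQ counit idemA.
split; first exact: counit_range_essential tensorQ counit idemA s_lin t_lin
  s_linl t_linl s_mul t_mul s_inj t_inj.
by split; [exact: s_counit_range_span tensorQ counit idemA
          | exact: t_counit_range_span tensorQ counit idemA].
Qed.
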